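(* Let $M\models\mathrm{AA}_0$ and $x\in M$. (i) $x$ is normal if and only if $1\le x$; in particular, if $x<1$ then $|x|<1$. (ii) $x$ is idempotent if and only if $x\le 1$.
   Context: Structures are complete metric spaces of diameter at most $1$ in $L=\{+,\cdot,\wedge,\vee,0,1\}$ (operations $1$-Lipschitz, $d$ the only relation symbol); affine conditions use formulas built from $1$ and $d(t_1,t_2)$ via $+$, real scalar multiples, $\sup$, $\inf$, free variables universally quantified. $|x|=d(x,0)$; $x$ is normal if $|x|=1$; $x$ is idempotent if $x^2=x$; $x\le y$ means $x\wedge y=x$, $x<y$ means $x\le y$ and $x\ne y$; $nx$, $x^n$ iterated sum/product. $\mathrm{AA}_0$ consists of: (A1) the identities of the nonnegative part of a lattice-ordered commutative ring with identity (commutative semiring axioms, lattice axioms, distributivity of $+,\cdot$ over $\wedge,\vee$, $0\le x$); (A2) $\inf_y d(x,(x\wedge y)+1)=1-|x|$ and $x\le x^2$; (A3) $d(x+z,y+z)=d(x,y)$; (A4) $d(y,z)\le d(xy,xz)+1-|x|$; (A5) $d(xy,xz)=d(x^ny,x^nz)\le d(y,z)$; (A6) $d(nx,ny)=d(x^n,y^n)=d(x,y)$, $n\ge1$; (A7) $|x\wedge y|+|x\vee y|=|x|+|y|$; (A8) $|xy+z|=|(x\wedge y)+z|$; (A9) $|x+y+z|=|(x\vee y)+z|$; (A10) $\inf_t d((x\wedge y)+t,y)=0$. *)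

From Stdlib Require Import Reals.
Open Scope R_scope.

Record LStruct := {
  carrier :> Type;
  dist : carrier -> carrier -> R;
  add : carrier -> carrier -> carrier;
  mul : carrier -> carrier -> carrier;
  meet : carrier -> carrier -> carrier;
  join : carrier -> carrier -> carrier;
  zero : carrier;
  one : carrier;
  dist_refl : forall x, dist x x = 0;
  dist_sep : forall x y, dist x y = 0 -> x = y;
  dist_sym : forall x y, dist x y = dist y x;
  dist_tri : forall x y z, dist x z <= dist x y + dist y z;
  dist_nonneg : forall x y, 0 <= dist x y;
  dist_le1 : forall x y, dist x y <= 1;
  dist_complete : forall u : nat -> carrier,
    (forall eps, 0 < eps -> exists N, forall m n, (N <= m)%nat -> (N <= n)%nat ->
        dist (u m) (u n) < eps) ->
    exists l, forall eps, 0 < eps -> exists N, forall n, (N <= n)%nat -> dist (u n) l < eps;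
  add_lip : forall x x' y y', dist (add x y) (add x' y') <= dist x x' + dist y y';
  mul_lip : forall x x' y y', dist (mul x y) (mul x' y') <= dist x x' + dist y y';
  meet_lip : forall x x' y y', dist (meet x y) (meet x' y') <= dist x x' + dist y y';
  join_lip : forall x x' y y', dist (join x y) (join x' y') <= dist x x' + dist y y'
}.

Arguments dist {l} x y.
Arguments add {l} x y.
Arguments mul {l} x y.
Arguments meet {l} x y.
Arguments join {l} x y.
Arguments zero {l}.
Arguments one {l}.

Section Ops.
Context {M : LStruct}.

Definition nrm (x : M) : R := dist x zero.
Definition le (x y : M) : Prop := meet x y = x.
Definition lt (x y : M) : Prop := le x y /\ x <> y.
(* n x (iterated sum) and x^n (iterated product); used only for n >= 1 *)
Fixpoint nsum (n : nat) (x : M) : M :=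
  match n with O => zero | S O => x | S k => add (nsum k x) x end.
Fixpoint npow (x : M) (n : nat) : M :=
  match n with O => one | S O => x | S k => mul (npow x k) x end.
End Ops.

Record AA0 (M : LStruct) : Prop := {
  A1_addA : forall x y z : M, add x (add y z) = add (add x y) z;
  A1_addC : forall x y : M, add x y = add y x;
  A1_add0 : forall x : M, add zero x = x;
  A1_mulA : forall x y z : M, mul x (mul y z) = mul (mul x y) z;
  A1_mulC : forall x y : M, mul x y = mul y x;
  A1_mul1 : forall x : M, mul one x = x;
  A1_mul0 : forall x : M, mul zero x = zero;
  A1_mulDl : forall x y z : M, mul x (add y z) = add (mul x y) (mul x z);
  A1_meetA : forall x y z : M, meet x (meet y z) = meet (meet x y) z;
  A1_meetC : forall x y : M, meet x y = meet y x;
  A1_joinA : forall x y z : M, join x (join y z) = join (join x y) z;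
  A1_joinC : forall x y : M, join x y = join y x;
  A1_meetxx : forall x : M, meet x x = x;
  A1_joinxx : forall x : M, join x x = x;
  A1_meetK : forall x y : M, meet x (join x y) = x;
  A1_joinK : forall x y : M, join x (meet x y) = x;
  A1_addI : forall x y z : M, add x (meet y z) = meet (add x y) (add x z);
  A1_addU : forall x y z : M, add x (join y z) = join (add x y) (add x z);
  A1_mulI : forall x y z : M, mul x (meet y z) = meet (mul x y) (mul x z);
  A1_mulU : forall x y z : M, mul x (join y z) = join (mul x y) (mul x z);
  A1_ge0 : forall x : M, le zero x;
  (* (A2) inf_y d(x,(x/\y)+1) = 1 - |x|, and x <= x^2 *)
  A2_inf_lb : forall x y : M, 1 - nrm x <= dist x (add (meet x y) one);
  A2_inf_approx : forall (x : M) eps, 0 < eps ->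
      exists y : M, dist x (add (meet x y) one) < 1 - nrm x + eps;
  A2_sq : forall x : M, le x (mul x x);
  A3 : forall x y z : M, dist (add x z) (add y z) = dist x y;
  A4 : forall x y z : M, dist y z <= dist (mul x y) (mul x z) + 1 - nrm x;
  A5_eq : forall (n : nat) (x y z : M), (1 <= n)%nat ->
      dist (mul x y) (mul x z) = dist (mul (npow x n) y) (mul (npow x n) z);
  A5_le : forall x y z : M, dist (mul x y) (mul x z) <= dist y z;
  A6_sum : forall (n : nat) (x y : M), (1 <= n)%nat -> dist (nsum n x) (nsum n y) = dist x y;
  A6_pow : forall (n : nat) (x y : M), (1 <= n)%nat -> dist (npow x n) (npow y n) = dist x y;
  A7 : forall x y : M, nrm (meet x y) + nrm (join x y) = nrm x + nrm y;
  A8 : forall x y z : M, nrm (add (mul x y) z) = nrm (add (meet x y) z);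
  A9 : forall x y z : M, nrm (add (add x y) z) = nrm (add (join x y) z);
  (* (A10) inf_t d((x/\y)+t, y) = 0 *)
  A10 : forall (x y : M) eps, 0 < eps -> exists t : M, dist (add (meet x y) t) y < eps
}.

(* The element [meet one x] measures how far [x] is from being above [1]:
   from (A2) and (A10) one gets (1 - |x|)/2 <= d(1 /\ x, 1) <= 1 - |x|, so [x] is normal
   exactly when [meet one x = one].  For an idempotent [x] put [a = x /\ 1] and use (A10)
   to pick [t] with [a + t] close to [1]; then [m = x + t] is nearly normal, and (A4)
   applied to [m] shows d(x, a) <= 6 d(a + t, 1), which is arbitrarily small. *)

From Pilot Require Import Defs.
From Stdlib Require Import Reals Lra.
(* Re-imported so that [dist] is the metric of [LStruct], not Stdlib's [Rtopology.dist]. *)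
Import Pilot.Defs.
Open Scope R_scope.

Lemma dist_eq0_of_small (M : LStruct) (u v : M) :
  (forall e, 0 < e -> dist u v <= e) -> u = v.
Proof.
  intros Hsmall. apply dist_sep, Rle_antisym; [|apply dist_nonneg].
  apply Rle_plus_epsilon. intros e He. rewrite Rplus_0_l. exact (Hsmall e He).
Qed.

Section AA0Theory.
Variable M : LStruct.
Hypothesis HM : AA0 M.

Lemma addr0 (u : M) : add u zero = u.
Proof. rewrite (A1_addC _ HM). apply (A1_add0 _ HM). Qed.

Lemma mulr1 (u : M) : mul u one = u.
Proof. rewrite (A1_mulC _ HM). apply (A1_mul1 _ HM). Qed.

Lemma le_anti (u v : M) : le u v -> le v u -> u = v.
Proof. unfold le. intros Huv Hvu. rewrite <- Huv, (A1_meetC _ HM). exact Hvu. Qed.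

Lemma le_add2r (u v w : M) : le u v -> le (add u w) (add v w).
Proof.
  unfold le. intros Huv.
  rewrite !(A1_addC _ HM _ w), <- (A1_addI _ HM), Huv. reflexivity.
Qed.

Lemma le_addr (u v : M) : le u (add u v).
Proof.
  unfold le. pose proof (A1_addI _ HM u zero v) as H.
  rewrite (A1_ge0 _ HM v), addr0 in H. symmetry. exact H.
Qed.

Lemma dist_meet2l (z u v : M) : dist (meet z u) (meet z v) <= dist u v.
Proof. pose proof (meet_lip M z z u v). rewrite dist_refl in *. lra. Qed.

Lemma dist_meet2r (z u v : M) : dist (meet u z) (meet v z) <= dist u v.
Proof. pose proof (meet_lip M u v z z). rewrite dist_refl in *. lra. Qed.

Lemma dist_add_self (u v : M) : dist (add u v) u = nrm v.
Proof.
  unfold nrm. rewrite <- (A3 _ HM v zero u), (A1_add0 _ HM), (A1_addC _ HM). reflexivity.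
Qed.

Lemma nrm_defect_le_dist_meet_one (w : M) : 1 - nrm w <= 2 * dist (meet one w) one.
Proof.
  (* (A2) is tested at [y := s], where (A10) makes [(1 /\ w) + s] close to [w]. *)
  set (c := dist (meet one w) one).
  apply Rle_plus_epsilon. intros e He.
  destruct (A10 _ HM one w (e / 2)) as [s Hs]; [lra|].
  assert (Hw : dist w (add s one) <= c + e / 2).
  { rewrite dist_sym, (A1_addC _ HM s).
    pose proof (dist_tri M (add one s) (add (meet one w) s) w) as H.
    rewrite (A3 _ HM), (dist_sym M one) in H. fold c in H. lra. }
  assert (Hws : dist (add (meet w s) one) (add s one) <= dist w (add s one)).
  { rewrite (A3 _ HM). pose proof (dist_meet2r s w (add s one)) as H.
    rewrite (A1_meetC _ HM (add s one)), (le_addr s one) in H. exact H. }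
  pose proof (A2_inf_lb _ HM w s).
  pose proof (dist_tri M w (add s one) (add (meet w s) one)).
  rewrite (dist_sym M (add s one)) in *. lra.
Qed.

Lemma dist_meet_one_le_nrm_defect (x : M) : dist (meet one x) one <= 1 - nrm x.
Proof.
  apply Rle_plus_epsilon. intros e He.
  destruct (A2_inf_approx _ HM x e He) as [y Hy].
  assert (Hone : le one (add (meet x y) one)).
  { rewrite (A1_addC _ HM). apply le_addr. }
  pose proof (dist_meet2l one x (add (meet x y) one)) as H.
  rewrite Hone in H. lra.
Qed.

Lemma normal_iff_ge_one (x : M) : nrm x = 1 <-> le one x.
Proof.
  unfold le. split.
  - intros Hx. apply dist_sep, Rle_antisym; [|apply dist_nonneg].
    pose proof (dist_meet_one_le_nrm_defect x). lra.
  - intros Hx. pose proof (nrm_defect_le_dist_meet_one x).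
    pose proof (dist_le1 M x zero). rewrite Hx, dist_refl in *. unfold nrm in *. lra.
Qed.

Lemma nrm_lt1_of_lt_one (x : M) : lt x one -> nrm x < 1.
Proof.
  intros [Hle Hneq]. destruct (Rle_lt_or_eq_dec _ _ (dist_le1 M x zero)) as [Hlt|Heq].
  - exact Hlt.
  - exfalso. apply Hneq, le_anti; [exact Hle|]. apply normal_iff_ge_one, Heq.
Qed.

Lemma nrm_ge_of_le (u v : M) : le u v -> 1 - 4 * dist u one <= nrm v.
Proof.
  unfold le. intros Huv.
  pose proof (dist_meet2r v one u) as H. rewrite Huv in H.
  pose proof (dist_tri M (meet one v) u one).
  pose proof (nrm_defect_le_dist_meet_one v).
  rewrite (dist_sym M one) in H. lra.
Qed.

Lemma idempotent_of_le_one (x : M) : le x one -> mul x x = x.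
Proof.
  unfold le. intros Hx. pose proof (A2_sq _ HM x) as Hsq. unfold le in Hsq.
  rewrite <- Hx at 2. rewrite (A1_mulI _ HM), mulr1, (A1_meetC _ HM). exact Hsq.
Qed.

Lemma nrm_mul_le (u b t : M) : mul u b = u -> nrm (mul u t) <= dist (add b t) one.
Proof.
  intros Hub. rewrite <- dist_add_self with (u := u), dist_sym.
  replace (add u (mul u t)) with (mul u (add b t))
    by (rewrite (A1_mulDl _ HM), Hub; reflexivity).
  rewrite <- (mulr1 u) at 1. rewrite (dist_sym M (add b t)). apply (A5_le _ HM).
Qed.

Section Idempotent.
Variable x : M.
Hypothesis Hx : mul x x = x.

Let a := meet x one.

Lemma mul_meet_one_r : mul x a = x.
Proof. unfold a. rewrite (A1_mulI _ HM), Hx, mulr1. apply (A1_meetxx _ HM). Qed.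

Lemma le_meet_one : le a x.
Proof.
  unfold le, a. rewrite (A1_meetC _ HM x one), <- (A1_meetA _ HM), (A1_meetxx _ HM).
  reflexivity.
Qed.

Lemma meet_one_idempotent : mul a a = a.
Proof.
  unfold a at 2.
  rewrite (A1_mulI _ HM), mulr1, (A1_mulC _ HM a x), mul_meet_one_r, (A1_meetC _ HM).
  exact le_meet_one.
Qed.

Lemma dist_meet_one_le (t : M) : dist x a <= 6 * dist (add a t) one.
Proof.
  set (m := add x t).
  assert (Hmx : dist (mul m x) x <= dist (add a t) one).
  { unfold m. rewrite (A1_mulC _ HM), (A1_mulDl _ HM), Hx, dist_add_self.
    apply nrm_mul_le, mul_meet_one_r. }
  assert (Hma : dist (mul m a) x <= dist (add a t) one).
  { unfold m. rewrite (A1_mulC _ HM), (A1_mulDl _ HM), (A1_mulC _ HM a x).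
    rewrite mul_meet_one_r, dist_add_self. apply nrm_mul_le, meet_one_idempotent. }
  pose proof (nrm_ge_of_le (add a t) m (le_add2r a x t le_meet_one)).
  pose proof (A4 _ HM m x a).
  pose proof (dist_tri M (mul m x) x (mul m a)).
  rewrite (dist_sym M x (mul m a)) in *. lra.
Qed.

Lemma le_one_of_idempotent : le x one.
Proof.
  symmetry. apply dist_eq0_of_small. intros e He. fold a.
  destruct (A10 _ HM x one (e / 6)) as [t Ht]; [lra|].
  pose proof (dist_meet_one_le t). fold a in Ht. lra.
Qed.

End Idempotent.
End AA0Theory.

Theorem mainTheorem17 (M : LStruct) (HM : AA0 M) (x : M) :
  (nrm x = 1 <-> le one x) /\
  (lt x one -> nrm x < 1) /\
  (mul x x = x <-> le x one).
Proof.
  split; [|split].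
  - exact (normal_iff_ge_one M HM x).
  - exact (nrm_lt1_of_lt_one M HM x).
  - split; [exact (le_one_of_idempotent M HM x) | exact (idempotent_of_le_one M HM x)].
Qed.
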